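(* For every $z\in\mathfrak U$ one has $T(z)\neq0$ and $z-\frac1{T(z)}>0$, so that $\tau(z):=\ln\big(z-\frac1{T(z)}\big)$ is real; moreover, whenever $\tau(z)\in(V_{j-1},V_j)$ for some $1\le j\le n$, the quantity $\chi(z)$ is real. In particular, for every such $z\in\mathfrak U$, $(\tau(z),\chi(z))$ is a real point on the frozen boundary.
   Context: Let $V_0<V_1<\dots<V_n$, $\beta_1,\dots,\beta_n\in[-1,1]$, $\beta_0:=-1$, $\beta_{n+1}:=1$, $\beta_i\ne\beta_{i+1}$ for all $i$; $V:[V_0,V_n]\to\mathbb R$ continuous, linear with slope $\beta_i$ on $[V_{i-1},V_i]$. Define $$T(z)=\sum_{i=0}^n\tfrac12(\beta_{i+1}-\beta_i)\frac1{z-e^{V_i}},\qquad \mathfrak U=(-\infty,e^{V_0})\cup(e^{V_n},\infty)\cup\bigcup_{1\le i\le n,\ \beta_i=\pm1}(e^{V_{i-1}},e^{V_i}).$$ For $z\in\mathfrak U$ with $\tau=\tau(z)\in(V_{j-1},V_j)$, define $$\chi(z)=-\sum_{i=1}^{j-1}\tfrac12(1+\beta_i)\operatorname{Ln}\frac{ze^{-V_i}-1}{ze^{-V_{i-1}}-1}-\tfrac12(1+\beta_j)\operatorname{Ln}\frac{ze^{-\tau}-1}{ze^{-V_{j-1}}-1}+\tfrac12(1-\beta_j)\operatorname{Ln}\frac{ze^{-V_j}-1}{ze^{-\tau}-1}+\sum_{i=j+1}^n\tfrac12(1-\beta_i)\operatorname{Ln}\frac{ze^{-V_i}-1}{ze^{-V_{i-1}}-1}-\tfrac12\tau+\tfrac12(V(V_0)+V_0),$$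 where $\operatorname{Ln}$ is the principal logarithm (imaginary part in $(-\pi,\pi]$) and a term whose coefficient is $0$ is taken to be $0$. The frozen boundary is the set of points $(\tau(z),\chi(z))$; these are exactly the $(\tau,\chi)$ for which $S_{\tau,\chi}$ (the function $\int_{V_0}^{\tau}\frac12(1+V')\ln(1-e^{M}/z)dM-\int_\tau^{V_n}\frac12(1-V')\ln(1-e^{-M}z)dM-(\chi-\frac12V(\tau))\ln z$) has a double real critical point. *)

From Stdlib Require Import Reals.
From Coquelicot Require Import Coquelicot.
Open Scope R_scope.

(* Principal argument, with values in (-PI, PI]:
   PI on the negative real axis, otherwise the standard half-angle formula
   Arg (x + i y) = 2 atan (y / (|w| + x)).  (Value at 0 is irrelevant.) *)
Definition Arg (w : C) : R :=
  if Req_EM_T (Im w) 0 then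
    (if Rlt_dec (Re w) 0 then PI else 2 * atan (Im w / (Cmod w + Re w)))
  else 2 * atan (Im w / (Cmod w + Re w)).

Definition Ln (w : C) : C := (ln (Cmod w), Arg w).

Definition cterm (c : R) (w : C) : C :=
  if Req_EM_T c 0 then RtoC 0 else Cmult (RtoC c) (Ln w).

Definition betaE (n : nat) (beta : nat -> R) (i : nat) : R :=
  if Nat.eqb i 0 then -1 else if Nat.eqb i (S n) then 1 else beta i.

Definition Tfun (n : nat) (V : nat -> R) (beta : nat -> R) (z : R) : R :=
  sum_f_R0 (fun i => / 2 * (betaE n beta (S i) - betaE n beta i) / (z - exp (V i))) n.

Definition inU (n : nat) (V : nat -> R) (beta : nat -> R) (z : R) : Prop :=
  z < exp (V 0%nat) \/ exp (V n) < z \/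
  exists i : nat, (1 <= i <= n)%nat /\ (beta i = 1 \/ beta i = -1) /\
                  exp (V (i - 1)%nat) < z < exp (V i).

Definition ratio (z a b : R) : C :=
  RtoC ((z * exp (- a) - 1) / (z * exp (- b) - 1)).

(* chi(z) for tau = tau(z) in (V_{j-1}, V_j); v0 stands for V(V_0). *)
Definition chi (n : nat) (V : nat -> R) (beta : nat -> R) (v0 : R)
    (z tau : R) (j : nat) : C :=
  Cplus
   (Cplus
    (Cplus
     (Cplus
      (Copp (sum_n_m (fun i => cterm (/ 2 * (1 + beta i)) (ratio z (V i) (V (i - 1)%nat)))
                     1 (j - 1)))
      (Copp (cterm (/ 2 * (1 + beta j)) (ratio z tau (V (j - 1)%nat)))))
     (cterm (/ 2 * (1 - beta j)) (ratio z (V j) tau)))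
    (sum_n_m (fun i => cterm (/ 2 * (1 - beta i)) (ratio z (V i) (V (i - 1)%nat)))
             (S j) n))
   (RtoC (- (/ 2) * tau + / 2 * (v0 + V 0%nat))).

From Stdlib Require Import Reals Lra Lia.
From Coquelicot Require Import Coquelicot.
Open Scope R_scope.

(* With h_i = 1/(z - e^{V_i}), summation by parts gives
     2 T(z) = 2 h_0 + sum_k (1 - beta_k) (h_k - h_{k-1})
            = 2 h_n - sum_k (1 + beta_k) (h_k - h_{k-1}).
   The increment h_k - h_{k-1} is positive unless z lies in the gap (e^{V_{k-1}}, e^{V_k}).
   On U at most one gap contains z, and there beta_k = 1 (resp. -1) kills the offending term
   of the first (resp. second) form.  Hence T >= h_0 with T h_0 > 0, which gives
   z - 1/T >= e^{V_0}, or T <= h_n < 0 with z > 0, which gives z - 1/T > z; in both cases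
   z - 1/T > 0, and the sign of T is that of beta_k when z is in the gap k.
   Every logarithm in chi has the real argument (z e^{-a} - 1)/(z e^{-b} - 1), which is
   nonnegative unless z lies strictly between e^a and e^b; when it does, z is in a gap, and
   since e^tau = z - 1/T lies on the side of z given by the sign of T, the coefficient
   (1 +- beta) of that term vanishes. *)

Lemma sum_n_m_le_loc (a b : nat -> R) (m l : nat) :
  (forall k, (m <= k <= l)%nat -> a k <= b k) -> sum_n_m a m l <= sum_n_m b m l.
Proof.
  intros Hab.
  rewrite (sum_n_m_ext_loc a (fun k => Rmin (a k) (b k)))
    by (intros k Hk; rewrite Rmin_left; auto).
  apply sum_n_m_le; intros k; apply Rmin_r.
Qed.

Lemma sum_by_parts (b f : nat -> R) (n : nat) :
  sum_n (fun i => (b (S i) - b i) * f i) n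
  = b (S n) * f n - b O * f O - sum_n_m (fun k => b k * (f k - f (k - 1)%nat)) 1 n.
Proof.
  induction n as [|n IH].
  - rewrite sum_O, sum_n_m_zero by lia. unfold zero; simpl. ring.
  - rewrite sum_Sn, sum_n_Sm, IH by lia.
    unfold plus; simpl. rewrite Nat.sub_0_r. ring.
Qed.

Lemma inv_sub_lt (x y z : R) : x < y -> 0 < (z - y) * (z - x) -> / (z - x) < / (z - y).
Proof.
  intros Hxy Hp.
  assert (Hx : z - x <> 0) by (intro E; rewrite E, Rmult_0_r in Hp; lra).
  assert (Hy : z - y <> 0) by (intro E; rewrite E, Rmult_0_l in Hp; lra).
  replace (/ (z - y)) with (/ (z - x) + (y - x) / ((z - y) * (z - x))) by (field; auto).
  assert (0 < (y - x) / ((z - y) * (z - x))) by (apply Rdiv_lt_0_compat; lra).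
  lra.
Qed.

Lemma sub_inv_ge (z e t : R) : / (z - e) <= t -> 0 < t * (z - e) -> e <= z - / t.
Proof.
  intros Hle Hpos.
  set (d := z - e) in *.
  assert (Ht : t <> 0) by (intro E; rewrite E, Rmult_0_l in Hpos; lra).
  assert (Hd : d <> 0) by (intro E; rewrite E, Rmult_0_r in Hpos; lra).
  assert (Hu : t * / t = 1) by (field; auto).
  assert (Hv : d * / d = 1) by (field; auto).
  assert (Hdu : 0 < d * / t).
  { replace (d * / t) with (t * d * (/ t * / t)) by (field; auto).
    apply Rmult_lt_0_compat; [lra|]. apply Rsqr_pos_lt, Rinv_neq_0_compat; auto. }
  assert (/ t <= d) by nra.
  unfold d in *; lra.
Qed.

Lemma outside_mul_pos (x y z : R) : x <= y -> z < x \/ y < z -> 0 < (z - y) * (z - x).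
Proof. intros Hxy [H|H]; nra. Qed.

Lemma between_of_mul_neg (x y z : R) : x < y -> (z - y) * (z - x) < 0 -> x < z < y.
Proof.
  intros Hxy Hneg. split.
  - destruct (Rle_lt_dec z x); [nra|lra].
  - destruct (Rle_lt_dec y z); [nra|lra].
Qed.

Lemma div_nonneg_of_mul_nonneg (x y : R) : 0 <= x * y -> 0 <= x / y.
Proof.
  intros H. destruct (Req_dec y 0) as [E|E].
  - rewrite E. unfold Rdiv. rewrite Rinv_0, Rmult_0_r. lra.
  - replace (x / y) with (x * y * (/ y * / y)) by (field; auto).
    apply Rmult_le_pos; [lra|]. apply Rle_0_sqr.
Qed.

Definition slope_sum (n : nat) (beta f : nat -> R) : R :=
  sum_f_R0 (fun i => / 2 * (betaE n beta (S i) - betaE n beta i) * f i) n.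

(* Summation by parts for [betaE - c]: [c = 1] and [c = -1] cancel the boundary term at
   [n], resp. at [0]. *)
Lemma slope_sum_by_parts (n : nat) (beta f : nat -> R) (c : R) :
  2 * slope_sum n beta f
  = (1 - c) * f n + (1 + c) * f O
    - sum_n_m (fun k => (beta k - c) * (f k - f (k - 1)%nat)) 1 n.
Proof.
  set (b := fun i => betaE n beta i - c).
  assert (Hb0 : b O = -1 - c) by reflexivity.
  assert (Hbn : b (S n) = 1 - c) by (unfold b, betaE; rewrite Nat.eqb_refl; reflexivity).
  rewrite (sum_n_m_ext_loc _ (fun k => b k * (f k - f (k - 1)%nat))).
  2: { intros k Hk. unfold b, betaE.
       replace (k =? 0)%nat with false by (symmetry; apply Nat.eqb_neq; lia).
       replace (k =? S n)%nat with false by (symmetry; apply Nat.eqb_neq; lia).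
       reflexivity. }
  transitivity (sum_n (fun i => (b (S i) - b i) * f i) n).
  - unfold slope_sum. rewrite <- sum_n_Reals.
    rewrite <- (sum_n_mult_l 2). apply sum_n_ext. intros i. unfold b, mult; simpl. field.
  - rewrite sum_by_parts, Hb0, Hbn. ring.
Qed.

Lemma slope_sum_ge_first (n : nat) (beta f : nat -> R) :
  (forall k, (1 <= k <= n)%nat -> 0 <= (1 - beta k) * (f k - f (k - 1)%nat)) ->
  f O <= slope_sum n beta f.
Proof.
  intros Hk.
  assert (Hsum : sum_n_m (fun k => (beta k - 1) * (f k - f (k - 1)%nat)) 1 n <= 0).
  { change 0 with (zero : R). rewrite <- (sum_n_m_const_zero 1 n).
    apply sum_n_m_le_loc. intros k Hkn. specialize (Hk k Hkn). unfold zero; simpl. lra. }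
  pose proof (slope_sum_by_parts n beta f 1). lra.
Qed.

Lemma slope_sum_le_last (n : nat) (beta f : nat -> R) :
  (forall k, (1 <= k <= n)%nat -> 0 <= (1 + beta k) * (f k - f (k - 1)%nat)) ->
  slope_sum n beta f <= f n.
Proof.
  intros Hk.
  assert (Hsum : 0 <= sum_n_m (fun k => (beta k - -1) * (f k - f (k - 1)%nat)) 1 n).
  { change 0 with (zero : R). rewrite <- (sum_n_m_const_zero 1 n).
    apply sum_n_m_le_loc. intros k Hkn. specialize (Hk k Hkn). unfold zero; simpl. lra. }
  pose proof (slope_sum_by_parts n beta f (-1)).
  lra.
Qed.

Lemma Im_Ln_nonneg (x : R) : 0 <= x -> Im (Ln (RtoC x)) = 0.
Proof.
  intros Hx. unfold Ln, Arg; simpl.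
  destruct (Req_EM_T 0 0) as [_|E]; [|lra].
  destruct (Rlt_dec x 0) as [L|_]; [lra|].
  unfold Rdiv. rewrite Rmult_0_l, atan_0. ring.
Qed.

Lemma Im_cterm_ratio (c z a b : R) :
  c = 0 \/ 0 <= (z - exp a) * (z - exp b) -> Im (cterm c (ratio z a b)) = 0.
Proof.
  intros H. unfold cterm. destruct (Req_EM_T c 0) as [E|E]; [reflexivity|].
  destruct H as [H|H]; [contradiction|].
  replace (Im (Cmult (RtoC c) (Ln (ratio z a b)))) with (c * Im (Ln (ratio z a b)))
    by (unfold Cmult; simpl; ring).
  unfold ratio. rewrite Im_Ln_nonneg; [ring|].
  apply div_nonneg_of_mul_nonneg.
  assert (Hexp : forall x, z * exp (- x) - 1 = exp (- x) * (z - exp x))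
    by (intros x; rewrite exp_Ropp; field; apply Rgt_not_eq, exp_pos).
  rewrite !Hexp.
  replace (exp (- a) * (z - exp a) * (exp (- b) * (z - exp b)))
    with (exp (- a) * exp (- b) * ((z - exp a) * (z - exp b))) by ring.
  apply Rmult_le_pos; [left; apply Rmult_lt_0_compat; apply exp_pos | exact H].
Qed.

Lemma Im_sum_n_m_eq0 (f : nat -> C) (m l : nat) :
  (forall k, (m <= k <= l)%nat -> Im (f k) = 0) -> Im (sum_n_m f m l) = 0.
Proof.
  induction l as [|l IH]; intros H.
  - destruct m.
    + rewrite sum_n_n. apply H; lia.
    + rewrite sum_n_m_zero by lia. reflexivity.
  - destruct (Nat.le_gt_cases m (S l)).
    + rewrite sum_n_Sm by lia.
      change (Im (sum_n_m f m l) + Im (f (S l)) = 0).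
      rewrite IH, H by (intros; try apply H; lia). ring.
    + rewrite sum_n_m_zero by lia. reflexivity.
Qed.

Lemma Im_chi_eq0 (n : nat) (V beta : nat -> R) (v0 z tau : R) (j : nat) :
  (forall i, (1 <= i <= j - 1)%nat ->
     beta i = -1 \/ 0 <= (z - exp (V i)) * (z - exp (V (i - 1)%nat))) ->
  (forall i, (S j <= i <= n)%nat ->
     beta i = 1 \/ 0 <= (z - exp (V i)) * (z - exp (V (i - 1)%nat))) ->
  beta j = -1 \/ 0 <= (z - exp tau) * (z - exp (V (j - 1)%nat)) ->
  beta j = 1 \/ 0 <= (z - exp (V j)) * (z - exp tau) ->
  Im (chi n V beta v0 z tau j) = 0.
Proof.
  intros Hlow Hhigh Hleft Hright. unfold chi.
  change (- Im (sum_n_m (fun i => cterm (/ 2 * (1 + beta i))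
                                          (ratio z (V i) (V (i - 1)%nat))) 1 (j - 1))
          + - Im (cterm (/ 2 * (1 + beta j)) (ratio z tau (V (j - 1)%nat)))
          + Im (cterm (/ 2 * (1 - beta j)) (ratio z (V j) tau))
          + Im (sum_n_m (fun i => cterm (/ 2 * (1 - beta i))
                                        (ratio z (V i) (V (i - 1)%nat))) (S j) n)
          + 0 = 0).
  rewrite !Im_sum_n_m_eq0, !Im_cterm_ratio; [ring| | | |].
  - destruct Hright as [E|P]; [left; rewrite E; lra | right; exact P].
  - destruct Hleft as [E|P]; [left; rewrite E; lra | right; exact P].
  - intros i Hi. apply Im_cterm_ratio.
    destruct (Hhigh i Hi) as [E|P]; [left; rewrite E; lra | right; exact P].
  - intros i Hi. apply Im_cterm_ratio.
    destruct (Hlow i Hi) as [E|P]; [left; rewrite E; lra | right; exact P].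
Qed.

Section Increasing_nodes.

Variables (n : nat) (V beta : nat -> R).
Hypothesis HV : forall i, (i < n)%nat -> V i < V (S i).
Hypothesis Hbeta : forall i, (1 <= i <= n)%nat -> -1 <= beta i <= 1.

Lemma exp_V_lt (i k : nat) : (i < k <= n)%nat -> exp (V i) < exp (V k).
Proof.
  induction k as [|k IH]; intros Hik; [lia|].
  apply Rle_lt_trans with (exp (V k)).
  - destruct (Nat.eq_dec i k) as [->|Hne]; [lra|]. left; apply IH; lia.
  - apply exp_increasing, HV; lia.
Qed.

Lemma exp_V_le (i k : nat) : (i <= k <= n)%nat -> exp (V i) <= exp (V k).
Proof.
  intros Hik. destruct (Nat.eq_dec i k) as [->|Hne]; [lra|].
  left; apply exp_V_lt; lia.
Qed.

Lemma outside_gap_pos (z : R) (k : nat) : (1 <= k <= n)%nat ->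
  z < exp (V (k - 1)%nat) \/ exp (V k) < z ->
  0 < (z - exp (V k)) * (z - exp (V (k - 1)%nat)).
Proof. intros Hk Hz. apply outside_mul_pos; [apply exp_V_le; lia | exact Hz]. Qed.

Lemma other_gaps_pos (z : R) (K k : nat) : (1 <= K <= n)%nat ->
  exp (V (K - 1)%nat) < z < exp (V K) -> (1 <= k <= n)%nat -> k <> K ->
  0 < (z - exp (V k)) * (z - exp (V (k - 1)%nat)).
Proof.
  intros HK [Hz1 Hz2] Hk HkK. apply outside_gap_pos; [exact Hk|].
  destruct (Nat.lt_total k K) as [Hlt|[Heq|Hgt]]; [| lia |].
  - right. pose proof (exp_V_le k (K - 1) ltac:(lia)); lra.
  - left. pose proof (exp_V_le K (k - 1) ltac:(lia)); lra.
Qed.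

Lemma inv_increment_pos (z : R) (k : nat) : (1 <= k <= n)%nat ->
  0 < (z - exp (V k)) * (z - exp (V (k - 1)%nat)) ->
  0 < / (z - exp (V k)) - / (z - exp (V (k - 1)%nat)).
Proof.
  intros Hk Hpos.
  assert (/ (z - exp (V (k - 1)%nat)) < / (z - exp (V k)))
    by (apply inv_sub_lt; [apply exp_V_lt; lia | exact Hpos]).
  lra.
Qed.

Lemma Tfun_ge_first (z : R) :
  (forall k, (1 <= k <= n)%nat ->
     beta k = 1 \/ 0 < (z - exp (V k)) * (z - exp (V (k - 1)%nat))) ->
  / (z - exp (V O)) <= Tfun n V beta z.
Proof.
  intros Hk.
  change (Tfun n V beta z) with (slope_sum n beta (fun i => / (z - exp (V i)))).
  apply (slope_sum_ge_first n beta (fun i => / (z - exp (V i)))).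
  intros k Hkn. destruct (Hk k Hkn) as [E|Hpos]; [rewrite E; lra|].
  apply Rmult_le_pos; [specialize (Hbeta k Hkn); lra | left; apply inv_increment_pos; auto].
Qed.

Lemma Tfun_le_last (z : R) :
  (forall k, (1 <= k <= n)%nat ->
     beta k = -1 \/ 0 < (z - exp (V k)) * (z - exp (V (k - 1)%nat))) ->
  Tfun n V beta z <= / (z - exp (V n)).
Proof.
  intros Hk.
  change (Tfun n V beta z) with (slope_sum n beta (fun i => / (z - exp (V i)))).
  apply (slope_sum_le_last n beta (fun i => / (z - exp (V i)))).
  intros k Hkn. destruct (Hk k Hkn) as [E|Hpos]; [rewrite E; lra|].
  apply Rmult_le_pos; [specialize (Hbeta k Hkn); lra | left; apply inv_increment_pos; auto].
Qed.

Lemma Tfun_bounds_in_gap (z : R) (K : nat) : (1 <= K <= n)%nat ->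
  exp (V (K - 1)%nat) < z < exp (V K) ->
  (beta K = 1 -> / (z - exp (V O)) <= Tfun n V beta z) /\
  (beta K = -1 -> Tfun n V beta z <= / (z - exp (V n))).
Proof.
  intros HK Hz. split; intros Hb.
  - apply Tfun_ge_first. intros k Hk.
    destruct (Nat.eq_dec k K) as [->|Hne]; [left; exact Hb|].
    right; apply (other_gaps_pos z K); auto.
  - apply Tfun_le_last. intros k Hk.
    destruct (Nat.eq_dec k K) as [->|Hne]; [left; exact Hb|].
    right; apply (other_gaps_pos z K); auto.
Qed.

Lemma Tfun_sign_in_gap (z : R) (i : nat) : inU n V beta z -> (1 <= i <= n)%nat ->
  exp (V (i - 1)%nat) < z < exp (V i) ->
  (beta i = 1 /\ 0 < Tfun n V beta z) \/ (beta i = -1 /\ Tfun n V beta z < 0).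
Proof.
  intros Hz Hi Hgap.
  destruct Hz as [Hz|[Hz|[K [HK [Hb HzK]]]]].
  - pose proof (exp_V_le O (i - 1) ltac:(lia)); lra.
  - pose proof (exp_V_le i n ltac:(lia)); lra.
  - assert (i = K) as ->.
    { destruct (Nat.eq_dec i K) as [E|Hne]; [exact E|].
      pose proof (other_gaps_pos z K i HK HzK Hi Hne). nra. }
    destruct (Tfun_bounds_in_gap z K HK HzK) as [Hfirst Hlast].
    destruct Hb as [Hb|Hb]; [left|right]; split; auto.
    + pose proof (exp_V_le O (K - 1) ltac:(lia)).
      assert (0 < / (z - exp (V O))) by (apply Rinv_0_lt_compat; lra).
      specialize (Hfirst Hb); lra.
    + pose proof (exp_V_le K n ltac:(lia)).
      assert (/ (z - exp (V n)) < 0) by (apply Rinv_lt_0_compat; lra).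
      specialize (Hlast Hb); lra.
Qed.

Lemma Tfun_shift_pos (z : R) : inU n V beta z ->
  Tfun n V beta z <> 0 /\ 0 < z - / Tfun n V beta z.
Proof.
  intros Hz. set (T := Tfun n V beta z).
  pose proof (exp_pos (V O)) as He0.
  assert (Hfirst : / (z - exp (V O)) <= T -> 0 < T * (z - exp (V O)) ->
                   T <> 0 /\ 0 < z - / T).
  { intros Hle Hpos. pose proof (sub_inv_ge z (exp (V O)) T Hle Hpos).
    split; [intros E; rewrite E, Rmult_0_l in Hpos|]; lra. }
  destruct Hz as [Hz|[Hz|[K [HK [Hb HzK]]]]].
  - assert (Hk : forall k, (1 <= k <= n)%nat ->
                 0 < (z - exp (V k)) * (z - exp (V (k - 1)%nat))).
    { intros k Hk. apply outside_gap_pos; [exact Hk|].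
      left. pose proof (exp_V_le O (k - 1) ltac:(lia)); lra. }
    assert (Hlo : / (z - exp (V O)) <= T) by (apply Tfun_ge_first; intros; right; auto).
    assert (Hhi : T <= / (z - exp (V n))) by (apply Tfun_le_last; intros; right; auto).
    pose proof (exp_V_le O n ltac:(lia)).
    assert (/ (z - exp (V n)) < 0) by (apply Rinv_lt_0_compat; lra).
    apply Hfirst; [exact Hlo | nra].
  - assert (Hlo : / (z - exp (V O)) <= T).
    { apply Tfun_ge_first. intros k Hk. right. apply outside_gap_pos; [exact Hk|].
      right. pose proof (exp_V_le k n ltac:(lia)); lra. }
    pose proof (exp_V_le O n ltac:(lia)).
    assert (0 < / (z - exp (V O))) by (apply Rinv_0_lt_compat; lra).
    apply Hfirst; [exact Hlo | apply Rmult_lt_0_compat; lra].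
  - destruct (Tfun_bounds_in_gap z K HK HzK) as [Hlo Hhi]. fold T in Hlo, Hhi.
    pose proof (exp_V_le O (K - 1) ltac:(lia)).
    pose proof (exp_V_le K n ltac:(lia)).
    destruct Hb as [Hb|Hb].
    + specialize (Hlo Hb).
      assert (0 < / (z - exp (V O))) by (apply Rinv_0_lt_compat; lra).
      apply Hfirst; [exact Hlo | apply Rmult_lt_0_compat; lra].
    + specialize (Hhi Hb).
      assert (/ (z - exp (V n)) < 0) by (apply Rinv_lt_0_compat; lra).
      assert (/ T < 0) by (apply Rinv_lt_0_compat; lra).
      split; lra.
Qed.

Lemma Im_chi_eq0_on_frozen_boundary (v0 z : R) (j : nat) : inU n V beta z ->
  Tfun n V beta z <> 0 -> (1 <= j <= n)%nat ->
  exp (V (j - 1)%nat) < z - / Tfun n V beta z < exp (V j) ->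
  Im (chi n V beta v0 z (ln (z - / Tfun n V beta z)) j) = 0.
Proof.
  intros Hz HT Hj Hw. set (T := Tfun n V beta z) in *. set (w := z - / T) in *.
  assert (Hsign : forall i, (1 <= i <= n)%nat -> exp (V (i - 1)%nat) < z < exp (V i) ->
            (beta i = 1 /\ w < z) \/ (beta i = -1 /\ z < w)).
  { intros i Hi Hgap. unfold w.
    destruct (Tfun_sign_in_gap z i Hz Hi Hgap) as [[Hb HT']|[Hb HT']];
      [left; assert (0 < / T) by (apply Rinv_0_lt_compat; exact HT')
      |right; assert (/ T < 0) by (apply Rinv_lt_0_compat; exact HT')];
      split; auto; lra. }
  pose proof (exp_pos (V (j - 1)%nat)).
  apply Im_chi_eq0; rewrite ?exp_ln by lra.
  - intros i Hi. destruct (Rle_lt_dec 0 ((z - exp (V i)) * (z - exp (V (i - 1)%nat))))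
      as [Hp|Hn]; [right; exact Hp|].
    apply between_of_mul_neg in Hn; [|apply exp_V_lt; lia].
    pose proof (exp_V_le i (j - 1) ltac:(lia)).
    destruct (Hsign i ltac:(lia) Hn) as [[_ Hwz]|[Hb _]]; [lra | left; exact Hb].
  - intros i Hi. destruct (Rle_lt_dec 0 ((z - exp (V i)) * (z - exp (V (i - 1)%nat))))
      as [Hp|Hn]; [right; exact Hp|].
    apply between_of_mul_neg in Hn; [|apply exp_V_lt; lia].
    pose proof (exp_V_le j (i - 1) ltac:(lia)).
    destruct (Hsign i ltac:(lia) Hn) as [[Hb _]|[_ Hzw]]; [left; exact Hb | lra].
  - destruct (Rle_lt_dec 0 ((z - w) * (z - exp (V (j - 1)%nat)))) as [Hp|Hn];
      [right; exact Hp|].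
    apply between_of_mul_neg in Hn; [|lra].
    destruct (Hsign j Hj ltac:(lra)) as [[_ Hwz]|[Hb _]]; [lra | left; exact Hb].
  - destruct (Rle_lt_dec 0 ((z - exp (V j)) * (z - w))) as [Hp|Hn]; [right; exact Hp|].
    apply between_of_mul_neg in Hn; [|lra].
    destruct (Hsign j Hj ltac:(lra)) as [[Hb _]|[_ Hzw]]; [left; exact Hb | lra].
Qed.

End Increasing_nodes.

Theorem proposition4p1
  (n : nat) (V : nat -> R) (beta : nat -> R) (Vf : R -> R)
  (HV : forall i : nat, (i < n)%nat -> V i < V (S i))
  (Hbeta : forall i : nat, (1 <= i <= n)%nat -> -1 <= beta i <= 1)
  (Hdiff : forall i : nat, (i <= n)%nat -> betaE n beta i <> betaE n beta (S i))
  (HVf : forall i : nat, (1 <= i <= n)%nat -> forall x : R,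
           V (i - 1)%nat <= x <= V i ->
           Vf x = Vf (V (i - 1)%nat) + beta i * (x - V (i - 1)%nat)) :
  forall z : R, inU n V beta z ->
    Tfun n V beta z <> 0 /\
    z - / Tfun n V beta z > 0 /\
    forall j : nat, (1 <= j <= n)%nat ->
      V (j - 1)%nat < ln (z - / Tfun n V beta z) < V j ->
      Im (chi n V beta (Vf (V 0%nat)) z (ln (z - / Tfun n V beta z)) j) = 0.
Proof.
  intros z Hz.
  destruct (Tfun_shift_pos n V beta HV Hbeta z Hz) as [HT Hw].
  split; [exact HT | split; [lra|]].
  intros j Hj [Hlo Hhi].
  apply (Im_chi_eq0_on_frozen_boundary n V beta HV Hbeta); auto.
  rewrite <- (exp_ln (z - / Tfun n V beta z) Hw).
  split; apply exp_increasing; assumption.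
Qed.
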